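(* Let $G=(V,E,w)$ be an undirected graph without self-loops, with $n\ge 2$ vertices, positive edge weights and conductance $\Phi_G>0$. Then every HC tree $\mathcal{T}$ of $G$ satisfies \[ \mathrm{cost}_G(\mathcal{T}) \le \frac{9}{4\Phi_G}\cdot \min\left\{\frac{d_{\mathrm{avg}}}{d_{\min}},\frac{d_{\max}}{d_{\mathrm{avg}}}\right\}\cdot \mathsf{OPT}_G. \]
   Context: $d_u=\sum_{v} w_{uv}$; $d_{\min},d_{\max}$ are the minimum and maximum degree, $d_{\mathrm{avg}}=\sum_u d_u/n$. $\mathrm{vol}(S)=\sum_{u\in S}d_u$. Conductance of nonempty $S$: $\Phi_G(S)=w(S,V\setminus S)/\mathrm{vol}(S)$ where $w(S,T)$ is the total weight of edges between $S$ and $T$; $\Phi_G=\min\{\Phi_G(S):\emptyset\ne S\subset V,\ \mathrm{vol}(S)\le\mathrm{vol}(V)/2\}$. An HC tree is a rooted binary tree whose leaves are in bijection with $V$; $u\vee v$ is the lowest common ancestor; $\mathrm{cost}_G(\mathcal{T})=\sum_{\{u,v\}\in E}w_{uv}|\mathsf{leaves}(\mathcal{T}[u\vee v])|$; $\mathsf{OPT}_G=\min_{\mathcal{T}}\mathrm{cost}_G(\mathcal{T})$. *)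

From HB Require Import structures.
From mathcomp Require Import all_boot all_order all_algebra.
From mathcomp Require Import boolp classical_sets reals.
Set Implicit Arguments. Unset Strict Implicit. Unset Printing Implicit Defensive.
Import Order.TTheory GRing.Theory Num.Theory.
Local Open Scope classical_set_scope.
Local Open Scope ring_scope.

Section Graph.
Variables (R : realType) (V : finType) (w : V -> V -> R).

Definition deg (u : V) : R := \sum_(v : V) w u v.
Definition dmin : R := inf [set deg u | u in [set: V]].
Definition dmax : R := sup [set deg u | u in [set: V]].
Definition davg : R := (\sum_(u : V) deg u) / #|V|%:R.
Definition vol (S : {set V}) : R := \sum_(u in S) deg u.
Definition cut (S T : {set V}) : R := \sum_(u in S) \sum_(v in T) w u v.
Definition cond_set (S : {set V}) : R := cut S (~: S) / vol S.
Definition conductance : R :=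
  inf [set cond_set S | S in
        [set S : {set V} | (S != @finset.set0 V) /\ (S \proper [set: V])%SET /\
                           vol S <= vol [set: V]%SET / 2]].
End Graph.

Inductive hctree (V : Type) :=
| HLeaf of V
| HNode of hctree V & hctree V.
Arguments HLeaf {V}.
Arguments HNode {V}.

Fixpoint leaves (V : Type) (T : hctree V) : seq V :=
  match T with
  | HLeaf v => [:: v]
  | HNode l r => leaves l ++ leaves r
  end.

Definition is_hc_tree (V : finType) (T : hctree V) : bool :=
  perm_eq (leaves T) (enum V).

(* |leaves(T[u \/ v])|: number of leaves of the subtree rooted at the lowest
   common ancestor of leaves u and v. *)
Fixpoint lca_size (V : eqType) (T : hctree V) (u v : V) : nat :=
  match T with
  | HLeaf _ => 1
  | HNode l r =>
      if (u \in leaves l) && (v \in leaves l) then lca_size l u v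
      else if (u \in leaves r) && (v \in leaves r) then lca_size r u v
      else size (leaves T)
  end.

(* cost_G(T) = sum over edges {u,v} (each unordered pair counted once,
   non-edges have weight 0) of w_uv |leaves(T[u \/ v])| *)
Definition hc_cost (R : realType) (V : finType) (w : V -> V -> R)
  (T : hctree V) : R :=
  \sum_(u : V) \sum_(v : V | (enum_rank u < enum_rank v)%N)
     w u v * (lca_size T u v)%:R.

Definition hc_opt (R : realType) (V : finType) (w : V -> V -> R) : R :=
  inf [set hc_cost w T | T in [set T : hctree V | is_hc_tree T]].

From HB Require Import structures.
From mathcomp Require Import all_boot all_order all_algebra.
From mathcomp Require Import boolp classical_sets reals.
From mathcomp Require Import ring lra.
Import Order.TTheory GRing.Theory Num.Theory.
Local Open Scope ring_scope.

(* Each edge pays at most n leaves, so every HC tree costs at most n vol(V)/2.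
   For lower bounds on OPT, fix a vertex weight p and walk down any HC tree
   towards the heavier child until the subtree S weighs at most 2/3 of the
   total; then S weighs at least 1/3, and every edge leaving S pays at least the
   number of leaves of the parent of S, which weighs more than 2/3.  If both S
   and its complement have volume at least c, the conductance gives
   w(S, V \ S) >= Phi c.  With p = 1 (c = d_min n/3) and p = deg (c = vol(V)/3,
   and the parent has at least 2 vol(V)/(3 d_max) leaves) this yields
   OPT >= 2/9 Phi d_min n^2 and OPT >= 2/9 Phi vol(V)^2 / d_max, i.e. the two
   bounds with n d_avg = vol(V). *)

Section HCTree.
Context {V : eqType}.
Implicit Types (t l r : hctree V) (u v : V).

Lemma lca_sizeC t u v : lca_size t u v = lca_size t v u.
Proof.
elim: t => [x|l IHl r IHr] //=.
by rewrite IHl IHr (andbC (v \in _)) (andbC (v \in leaves r)).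
Qed.

Lemma lca_size_le_leaves t u v : (lca_size t u v <= size (leaves t))%N.
Proof.
elim: t => [x|l IHl r IHr] //=; rewrite size_cat.
case: ifP => _; first exact: leq_trans IHl (leq_addr _ _).
by case: ifP => _ //; apply: leq_trans IHr (leq_addl _ _).
Qed.

Section Node.
Context {l r : hctree V}.
Hypothesis uniq_lr : uniq (leaves (HNode l r)).

Let notin_r u : u \in leaves l -> (u \in leaves r) = false.
Proof.
move: uniq_lr; rewrite /= cat_uniq => /and3P [_ /hasPn dis _] ul.
by apply/negbTE/negP => /dis; rewrite ul.
Qed.

Lemma lca_size_nodeC u v : lca_size (HNode l r) u v = lca_size (HNode r l) u v.
Proof.
rewrite /= !size_cat addnC.
by case: ifP => // /andP [ul _]; rewrite notin_r.
Qed.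

Lemma lca_size_node_sep u v : u \in leaves l -> v \notin leaves l ->
  lca_size (HNode l r) u v = size (leaves (HNode l r)).
Proof. by move=> ul vl; rewrite /= ul (negbTE vl) notin_r. Qed.

Lemma lca_size_node_ge u v : u \in leaves l ->
  (lca_size l u v <= lca_size (HNode l r) u v)%N.
Proof.
move=> ul; rewrite /= ul notin_r //=.
by case: ifP => // _; apply: leq_trans (lca_size_le_leaves l u v) _; rewrite size_cat leq_addr.
Qed.

End Node.

(* Descend from the root towards the heavier child: [S] is the first subtree of
   weight at most [2 a] and [Q] the leaves of its parent. *)
Lemma balanced_subtree {R : realDomainType} {p : V -> R} {a : R} {t} :
  (forall x, p x <= 2 * a) ->
  uniq (leaves t) -> 2 * a < \sum_(x <- leaves t) p x ->
  exists S Q : seq V, [/\ uniq S, {subset S <= leaves t},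
    a <= \sum_(x <- S) p x <= 2 * a, 2 * a < \sum_(x <- Q) p x &
    forall u v, u \in S -> v \notin S -> (size Q <= lca_size t u v)%N].
Proof.
move=> p_le; elim: t => [x _|l IHl r IHr]; first by rewrite /= big_seq1 ltNge p_le.
wlog le_rl : l r IHl IHr / \sum_(x <- leaves r) p x <= \sum_(x <- leaves l) p x.
  move=> hwlog; have [|/ltW le_lr] := lerP (\sum_(x <- leaves r) p x) (\sum_(x <- leaves l) p x).
    exact: hwlog.
  have perm_rl : perm_eq (leaves (HNode r l)) (leaves (HNode l r)) by rewrite perm_catC.
  rewrite -(perm_uniq perm_rl) -(perm_big _ perm_rl) => uniq_rl sum_gt.
  have [S [Q [uS sub_S sum_S sum_Q sep]]] := hwlog r l IHr IHl le_lr uniq_rl sum_gt.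
  exists S, Q; split=> // [x /sub_S|u v uS' vS]; first by rewrite (perm_mem perm_rl).
  by rewrite -(lca_size_nodeC uniq_rl); apply: sep.
move=> uniq_lr; have ul : uniq (leaves l) by move: uniq_lr; rewrite /= cat_uniq => /andP [].
rewrite -[leaves (HNode l r)]/(leaves l ++ leaves r) => sum_gt.
rewrite big_cat /= in sum_gt.
have [le_l|gt_l] := lerP (\sum_(x <- leaves l) p x) (2 * a).
  exists (leaves l), (leaves l ++ leaves r); split=> //.
  - by move=> x xl; rewrite mem_cat xl.
  - by rewrite le_l andbT; lra.
  - by rewrite big_cat.
  by move=> u v ul' vl; rewrite (lca_size_node_sep uniq_lr _ _ ul' vl).
have [S [Q [uS sub_S sum_S sum_Q sep]]] := IHl ul gt_l.
exists S, Q; split=> // [x /sub_S xl|u v uS' vS]; first by rewrite mem_cat xl.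
exact: leq_trans (sep u v uS' vS) (lca_size_node_ge uniq_lr _ v (sub_S u uS')).
Qed.

End HCTree.

Section HCTreeFin.
Context {V : finType} {t : hctree V}.
Hypothesis t_hc : is_hc_tree t.

Lemma size_hc_leaves : size (leaves t) = #|V|.
Proof. by rewrite (perm_size t_hc) -cardE. Qed.

Lemma uniq_hc_leaves : uniq (leaves t).
Proof. by rewrite (perm_uniq t_hc) enum_uniq. Qed.

Lemma big_hc_leaves (R : nmodType) (F : V -> R) :
  \sum_(x <- leaves t) F x = \sum_x F x.
Proof. by rewrite (perm_big _ t_hc) big_enum. Qed.

End HCTreeFin.

Lemma lb_le_hc_opt (R : realType) (V : finType) (w : V -> V -> R) (b : R) (t0 : hctree V) :
  is_hc_tree t0 -> (forall t, is_hc_tree t -> b <= hc_cost w t) -> b <= hc_opt w.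
Proof.
move=> t0_hc cost_ge; apply: lb_le_inf; first by exists (hc_cost w t0), t0.
by move=> _ [t t_hc <-]; apply: cost_ge.
Qed.

Lemma sum_sym_offdiag (R : comPzRingType) (V : finType) (f : V -> V -> R) :
  (forall u v, f u v = f v u) -> (forall u, f u u = 0) ->
  \sum_u \sum_v f u v =
    2 * \sum_u \sum_(v | (enum_rank u < enum_rank v)%N) f u v.
Proof.
move=> fC f0.
have split_row u : \sum_v f u v =
    \sum_(v | (enum_rank u < enum_rank v)%N) f u v +
    \sum_(v | (enum_rank v < enum_rank u)%N) f v u.
  rewrite !(big_mkcond (fun v => (_ < _)%N)) -big_split; apply: eq_bigr => v _ /=.
  case: ltngtP => [_|_|/val_inj/enum_rank_inj ->]; rewrite ?addr0 ?add0r ?f0 //.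
rewrite (eq_bigr _ (fun u _ => split_row u)) big_split /=.
rewrite [X in _ + X](exchange_big_dep xpredT) //=; ring.
Qed.

Lemma sumr_setC {R : nmodType} {V : finType} (F : V -> R) (X : {set V}) :
  \sum_(x in X) F x + \sum_(x in ~: X) F x = \sum_x F x.
Proof. by rewrite [RHS](bigID (mem X)); congr (_ + _); apply: eq_bigl => x; rewrite inE. Qed.

Section Graph.
Variables (R : realType) (V : finType) (w : V -> V -> R).
Hypotheses (w_sym : forall u v, w u v = w v u) (w_loop : forall u, w u u = 0)
  (w_ge0 : forall u v, 0 <= w u v).

Lemma cutC (S T : {set V}) : cut w S T = cut w T S.
Proof. by rewrite /cut exchange_big; apply: eq_bigr => u _; apply: eq_bigr. Qed.

Lemma deg_ge0 u : 0 <= deg w u.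
Proof. exact: sumr_ge0. Qed.

Lemma vol_ge0 S : 0 <= vol w S.
Proof. by apply: sumr_ge0 => u _; apply: deg_ge0. Qed.

Lemma cut_ge0 S T : 0 <= cut w S T.
Proof. by apply: sumr_ge0 => u _; apply: sumr_ge0. Qed.

Lemma vol_setT : vol w [set: V] = \sum_u deg w u.
Proof. by apply: eq_bigl => u; rewrite inE. Qed.

Lemma vol_setC S : vol w S + vol w (~: S) = \sum_u deg w u.
Proof. exact: sumr_setC. Qed.

Lemma deg_le_half u : 2 * deg w u <= \sum_x deg w x.
Proof.
have deg_other : deg w u <= \sum_(x | x != u) deg w x.
  rewrite /deg (bigD1 u) //= w_loop add0r; apply: ler_sum => x _.
  by rewrite w_sym [leRHS](bigD1 u) //= lerDl; apply: sumr_ge0.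
by rewrite (bigD1 u) //=; lra.
Qed.

Lemma hc_cost_double t :
  \sum_u \sum_v w u v * (lca_size t u v)%:R = 2 * hc_cost w t.
Proof.
apply: sum_sym_offdiag => [u v|u]; first by rewrite w_sym lca_sizeC.
by rewrite w_loop mul0r.
Qed.

Lemma hc_cost_ge_cut t (X : {set V}) (k : nat) :
  (forall u v, u \in X -> v \notin X -> (k <= lca_size t u v)%N) ->
  k%:R * cut w X (~: X) <= hc_cost w t.
Proof.
move=> lca_ge.
have cut_sep (A B : {set V}) : cut w A B * k%:R =
    \sum_u \sum_v (if (u \in A) && (v \in B) then w u v * k%:R else 0).
  rewrite /cut big_distrl big_mkcond; apply: eq_bigr => u _ /=.
  case: (u \in A); last by rewrite big1.
  by rewrite big_distrl big_mkcond; apply: eq_bigr => v _; case: (v \in B).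
suff: cut w X (~: X) * k%:R + cut w (~: X) X * k%:R <= 2 * hc_cost w t.
  by rewrite (cutC (~: X)); lra.
rewrite -hc_cost_double !cut_sep -big_split; apply: ler_sum => u _.
rewrite -big_split; apply: ler_sum => v _; rewrite !inE.
case uX: (u \in X); case vX: (v \in X); rewrite /= ?addr0 ?add0r ?mulr_ge0 //.
  by apply: ler_wpM2l; rewrite ?ler_nat ?lca_ge ?vX.
by apply: ler_wpM2l; rewrite ?ler_nat // lca_sizeC lca_ge ?uX.
Qed.

Lemma hc_cost_le_card t : is_hc_tree t ->
  hc_cost w t <= #|V|%:R * (\sum_u deg w u) / 2.
Proof.
move=> t_hc; suff: 2 * hc_cost w t <= #|V|%:R * \sum_u deg w u by lra.
rewrite -hc_cost_double mulr_sumr; apply: ler_sum => u _.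
rewrite /deg mulr_sumr; apply: ler_sum => v _; rewrite [leRHS]mulrC; apply: ler_wpM2l => //.
by rewrite ler_nat -(size_hc_leaves t_hc) lca_size_le_leaves.
Qed.

Section Conductance.
Hypothesis cond_gt0 : 0 < conductance w.

Definition cond_candidate (S : {set V}) : Prop :=
  S != finset.set0 /\ (S \proper [set: V])%SET /\ vol w S <= vol w [set: V] / 2.

Lemma conductance_le S : cond_candidate S -> conductance w <= cond_set w S.
Proof.
move=> S_cand; apply: ge_inf; last by exists S.
exists 0 => _ [T _ <-]; exact: divr_ge0 (cut_ge0 _ _) (vol_ge0 _).
Qed.

Lemma cut_ge_conductance (X : {set V}) (c : R) : 0 < c ->
  c <= vol w X -> c <= vol w (~: X) -> conductance w * c <= cut w X (~: X).
Proof.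
move=> c_gt0.
wlog vol_le : X / vol w X <= vol w [set: V] / 2.
  move=> hwlog cX cCX.
  have [le_half|gt_half] := leP (vol w X) (vol w [set: V] / 2); first exact: hwlog.
  rewrite cutC -[X in cut w _ X]finset.setCK; apply: hwlog; rewrite ?finset.setCK //.
  by have := vol_setC X; rewrite -vol_setT; lra.
move=> cX cCX.
have nonempty S : c <= vol w S -> S != finset.set0.
  by move=> cS; apply/eqP => S0; move: cS; rewrite S0 /vol big_set0; lra.
have X_cand : cond_candidate X.
  split; first exact: nonempty.
  split=> //; rewrite properT; apply: contraNneq (nonempty _ cCX) => ->.
  by rewrite finset.setCT.
have := conductance_le _ X_cand; rewrite /cond_set ler_pdivlMr; last exact: lt_le_trans cX.
by apply: le_trans; apply: ler_wpM2l => //; apply: ltW.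
Qed.

Lemma hc_cost_ge_balanced (p : V -> R) (P : R) {c : R} {t : hctree V} : is_hc_tree t ->
  \sum_x p x = P -> 0 < P -> (forall x, p x <= 2 * (P / 3)) -> 0 < c ->
  (forall X : {set V}, P / 3 <= \sum_(x in X) p x -> c <= vol w X) ->
  exists2 Q : seq V, 2 * (P / 3) < \sum_(x <- Q) p x &
    (size Q)%:R * (conductance w * c) <= hc_cost w t.
Proof.
move=> t_hc sum_p P_gt0 p_le c_gt0 vol_ge.
have [|S [Q [uS _ /andP [S_ge S_le] Q_gt sep]]] :=
  balanced_subtree p_le (uniq_hc_leaves t_hc).
  by rewrite big_hc_leaves // sum_p; lra.
exists Q => //; set X := [set x in S].
have sum_X : \sum_(x in X) p x = \sum_(x <- S) p x.
  by rewrite big_uniq //; apply: eq_bigl => x; rewrite inE.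
have := sumr_setC p X; rewrite sum_p sum_X => sum_CX.
have cut_ge : conductance w * c <= cut w X (~: X).
  by apply: cut_ge_conductance => //; apply: vol_ge; lra.
apply: le_trans (@hc_cost_ge_cut t X (size Q) _); last by move=> u v; rewrite !inE; apply: sep.
by apply: ler_wpM2l.
Qed.

Hypothesis card_ge2 : (2 <= #|V|)%N.

Let card_gt0 : (0 < #|V|)%N := leq_trans (isT : (0 < 2)%N) card_ge2.

Lemma deg_gt0 u : 0 < deg w u.
Proof.
have u_cand : cond_candidate [set u].
  split; first by apply/set0Pn; exists u; rewrite inE.
  split; last by rewrite vol_setT /vol big_set1; have := deg_le_half u; lra.
  by rewrite properT; apply/eqP => uT; move: card_ge2; rewrite -cardsT -uT cards1.
(* [cond_set] of a set of volume [0] is [0], as [x / 0 = 0]. *)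
rewrite lt_def deg_ge0 andbT; apply: contraTneq cond_gt0 => deg0.
have := conductance_le _ u_cand.
by rewrite /cond_set /vol big_set1 deg0 invr0 mulr0 -leNgt.
Qed.

Lemma sum_deg_gt0 : 0 < \sum_u deg w u.
Proof.
have /card_gt0P [u _] := card_gt0.
by have := deg_le_half u; have := deg_gt0 u; lra.
Qed.

Lemma dmin_le u : dmin w <= deg w u.
Proof. by apply: ge_inf; [exists 0 => _ [x _ <-]; apply: deg_ge0 | exists u]. Qed.

Lemma dmin_gt0 : 0 < dmin w.
Proof.
have /card_gt0P [u _] := card_gt0.
have [m _ m_min] := @arg_minP _ R V u xpredT (deg w) erefl.
apply: lt_le_trans (deg_gt0 m) _; apply: lb_le_inf; first by exists (deg w u), u.
by move=> _ [x _ <-]; apply: m_min.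
Qed.

Lemma dmax_ge u : deg w u <= dmax w.
Proof.
apply: ub_le_sup; last by exists u.
exists (\sum_x deg w x) => _ [x _ <-].
by have := deg_le_half x; have := deg_ge0 x; lra.
Qed.

Lemma dmax_gt0 : 0 < dmax w.
Proof. by have /card_gt0P [u _] := card_gt0; apply: lt_le_trans (deg_gt0 u) (dmax_ge u). Qed.

Lemma hc_cost_ge_dmin t : is_hc_tree t ->
  2 / 9 * conductance w * dmin w * #|V|%:R ^+ 2 <= hc_cost w t.
Proof.
move=> t_hc; set n : R := #|V|%:R.
have n_ge2 : 2 <= n by rewrite (ler_nat R 2).
have c_gt0 : 0 < dmin w * (n / 3) by apply: mulr_gt0; [exact: dmin_gt0 | lra].
have vol_ge (X : {set V}) : n / 3 <= \sum_(x in X) 1 -> dmin w * (n / 3) <= vol w X.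
  rewrite sumr_const => X_ge; apply: le_trans (ler_wpM2l (ltW dmin_gt0) X_ge) _.
  rewrite -sumr_const mulr_sumr; apply: ler_sum => x _; rewrite mulr1; exact: dmin_le.
have [|||Q Q_gt cost_ge] := hc_cost_ge_balanced (fun=> 1) n t_hc _ _ _ c_gt0 vol_ge.
- by rewrite sumr_const.
- lra.
- move=> _; lra.
rewrite big_const_seq count_predT iter_addr_0 in Q_gt.
apply: le_trans cost_ge.
rewrite [leLHS](_ : _ = 2 * (n / 3) * (conductance w * (dmin w * (n / 3)))); last by field.
by apply: ler_wpM2r (ltW Q_gt); apply: mulr_ge0 (ltW cond_gt0) (ltW c_gt0).
Qed.

Lemma hc_cost_ge_dmax t : is_hc_tree t ->
  2 / 9 * conductance w * (\sum_u deg w u) ^+ 2 / dmax w <= hc_cost w t.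
Proof.
move=> t_hc; set P := \sum_u deg w u.
have P_gt0 : 0 < P := sum_deg_gt0.
have c_gt0 : 0 < P / 3 by lra.
have deg_le u : deg w u <= 2 * (P / 3).
  by move: (deg_le_half u) (deg_ge0 u); rewrite -/P; lra.
have [Q Q_gt cost_ge] := hc_cost_ge_balanced (deg w) P t_hc erefl P_gt0 deg_le c_gt0 (fun X => id).
have sum_Q : \sum_(x <- Q) deg w x <= (size Q)%:R * dmax w.
  apply: le_trans (ler_sum _ (fun x _ => dmax_ge x)) _.
  by rewrite big_const_seq count_predT iter_addr_0 mulr_natl.
rewrite ler_pdivrMr ?dmax_gt0 //.
apply: le_trans (ler_wpM2r (ltW dmax_gt0) cost_ge).
rewrite [leLHS](_ : _ = 2 * (P / 3) * (conductance w * (P / 3))); last by field.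
rewrite [leRHS]mulrAC; apply: ler_wpM2r; first exact: mulr_ge0 (ltW cond_gt0) (ltW c_gt0).
exact: le_trans (ltW Q_gt) sum_Q.
Qed.

Lemma hc_cost_le_davg_opt t : is_hc_tree t ->
  hc_cost w t <= 9 / (4 * conductance w) * (davg w / dmin w) * hc_opt w.
Proof.
move=> t_hc; have n_gt0 : 0 < #|V|%:R :> R by rewrite ltr0n.
apply: le_trans (hc_cost_le_card _ t_hc) _.
rewrite [leLHS](_ : _ = 9 / (4 * conductance w) * (davg w / dmin w) *
    (2 / 9 * conductance w * dmin w * #|V|%:R ^+ 2)); last first.
  by rewrite /davg; field; rewrite !gt_eqF ?dmin_gt0.
apply: ler_wpM2l; last exact: lb_le_hc_opt t_hc hc_cost_ge_dmin.
by apply/ltW; rewrite /davg !(mulr_gt0, divr_gt0, invr_gt0) ?sum_deg_gt0 ?dmin_gt0.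
Qed.

Lemma hc_cost_le_dmax_opt t : is_hc_tree t ->
  hc_cost w t <= 9 / (4 * conductance w) * (dmax w / davg w) * hc_opt w.
Proof.
move=> t_hc; have n_gt0 : 0 < #|V|%:R :> R by rewrite ltr0n.
apply: le_trans (hc_cost_le_card _ t_hc) _.
rewrite [leLHS](_ : _ = 9 / (4 * conductance w) * (dmax w / davg w) *
    (2 / 9 * conductance w * (\sum_u deg w u) ^+ 2 / dmax w)); last first.
  by rewrite /davg; field; rewrite !gt_eqF ?dmax_gt0 ?sum_deg_gt0.
apply: ler_wpM2l; last exact: lb_le_hc_opt t_hc hc_cost_ge_dmax.
by apply/ltW; rewrite /davg !(mulr_gt0, divr_gt0, invr_gt0) ?sum_deg_gt0 ?dmax_gt0.
Qed.

End Conductance.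

End Graph.

Theorem lemma3p1 (R : realType) (V : finType) (w : V -> V -> R)
  (hn : (2 <= #|V|)%N)
  (hsym : forall u v, w u v = w v u)
  (hloop : forall u, w u u = 0)
  (hnonneg : forall u v, 0 <= w u v)
  (hcond : 0 < conductance w)
  (T : hctree V) (hT : is_hc_tree T) :
  hc_cost w T <=
    9 / (4 * conductance w) *
    Num.min (davg w / dmin w) (dmax w / davg w) * hc_opt w.
Proof.
rewrite minEle; case: (leP (davg w / dmin w) (dmax w / davg w)) => _.
- exact: hc_cost_le_davg_opt.
- exact: hc_cost_le_dmax_opt.
Qed.
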